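(* Let $G$ be a finite group of nilpotency class at most $2$. Let $e=\exp(G)$, $e'=\exp([G,G])$ and $f=\exp(G/Z(G))$. Then $$W:=\{x^m[x,y^n]\in F_2:\ m\mid e,\ n\mid f,\ n\le e'\}$$ is a $2$-exhaustive set for word images on $G$; that is, for every $v\in F_2$ there exists $w\in W$ with $v(G)=w(G)$.
   Context: $[a,b]=aba^{-1}b^{-1}$; $x,y$ are the free generators of $F_2$; for $w\in F_2$, $w(G)=\{w(a,b):a,b\in G\}$. Nilpotency class at most 2 means $[G,G]\subseteq Z(G)$. A subset $W\subseteq F_d$ is a $d$-exhaustive set for word images on $G$ if for every $v\in F_d$ there is $w\in W$ with $v(G)=w(G)$. *)

From HB Require Import structures.
From mathcomp Require Import all_boot all_fingroup all_solvable.
Set Implicit Arguments. Unset Strict Implicit. Unset Printing Implicit Defensive.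
Local Open Scope group_scope.

(* Words in the free group F_2 on generators x, y, represented as group terms.
   Every element of F_2 is the value of such a term, and evaluation at (a,b)
   factors through F_2, so word images are well defined on F_2. *)
Inductive word2 : Type :=
  | WX : word2
  | WY : word2
  | W1 : word2
  | WMul : word2 -> word2 -> word2
  | WInv : word2 -> word2.

Fixpoint weval (gT : finGroupType) (a b : gT) (w : word2) : gT :=
  match w with
  | WX => a
  | WY => b
  | W1 => 1
  | WMul u v => weval a b u * weval a b v
  | WInv u => (weval a b u)^-1
  end.

Definition wpow (w : word2) (n : nat) : word2 := iter n (WMul w) W1.

(* paper's commutator convention [u,v] = u v u^-1 v^-1 *)
Definition wcomm (u v : word2) : word2 :=
  WMul (WMul u v) (WMul (WInv u) (WInv v)).

Definition wW (m n : nat) : word2 := WMul (wpow WX m) (wcomm WX (wpow WY n)).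

Definition word_image (gT : finGroupType) (G : {set gT}) (w : word2) : {set gT} :=
  [set weval a b w | a in G, b in G].

From mathcomp Require Import all_boot all_fingroup all_solvable.
From mathcomp Require Import zify.
Set Implicit Arguments. Unset Strict Implicit. Unset Printing Implicit Defensive.
Local Open Scope group_scope.

(* In class 2, every word evaluates at (a, b) to a collected form
   a^i b^j [a,b]^l, so v(G) is the set T(i,j,l) of all such values.  The
   Nielsen substitutions a |-> a b^h and b |-> b a^h permute G x G and act on
   (i, j) by elementary column operations, so Euclid's algorithm, run once on
   (i, j) and once more on (gcd(i,j), exp G), brings the exponents to
   (m, 0) with m | exp G.  Finally b |-> b^u with Bezout coefficients u
   replaces l by gcd(l, exp [G,G]), which divides exp(G/Z(G)). *)

Lemma weval_wpow (gT : finGroupType) (a b : gT) w n :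
  weval a b (wpow w n) = weval a b w ^+ n.
Proof. by elim: n => [|n IHn] //=; rewrite IHn expgS. Qed.

Definition collected (gT : finGroupType) (a b : gT) (i j l : nat) :=
  a ^+ i * b ^+ j * [~ a, b] ^+ l.

Section ClassTwo.

Variables (gT : finGroupType) (G : {group gT}).
Hypothesis cGG : [~: G, G] \subset 'Z(G).

Let e := exponent G.
(* Exponents are natural numbers: k plays the role of -1 modulo e. *)
Let k := e.-1.

Lemma exponent_predK : e = k.+1.
Proof. by rewrite /k prednK // exponent_gt0. Qed.

Lemma commg_center x y : x \in G -> y \in G -> [~ x, y] \in 'Z(G).
Proof. by move=> xG yG; apply: (subsetP cGG); apply: mem_commg. Qed.

Lemma center_mulC z x : z \in 'Z(G) -> x \in G -> z * x = x * z.
Proof. by move=> zZ xG; rewrite (centerC xG zZ). Qed.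

Lemma center_conj z x : z \in 'Z(G) -> x \in G -> z ^ x = z.
Proof. by move=> zZ xG; rewrite /conjg (center_mulC zZ xG) mulKg. Qed.

Lemma commute_commg x y z : x \in G -> y \in G -> z \in G -> commute z [~ x, y].
Proof. by move=> xG yG zG; apply: (centerC zG); apply: commg_center. Qed.

Lemma commgXXn x y i j : x \in G -> y \in G ->
  [~ x ^+ i, y ^+ j] = [~ x, y] ^+ (i * j).
Proof. by move=> xG yG; apply: commXXg; apply: commute_commg. Qed.

Lemma commgXn x y j : x \in G -> y \in G -> [~ x, y ^+ j] = [~ x, y] ^+ j.
Proof. by move=> xG yG; have := commgXXn 1 j xG yG; rewrite expg1 mul1n. Qed.

Lemma commXgn x y i : x \in G -> y \in G -> [~ x ^+ i, y] = [~ x, y] ^+ i.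
Proof. by move=> xG yG; have := commgXXn i 1 xG yG; rewrite expg1 muln1. Qed.

Lemma commgVn x y : x \in G -> y \in G -> [~ y, x] = [~ x, y] ^+ k.
Proof.
move=> xG yG; rewrite -invg_comm; apply/eqP; rewrite eq_invg_mul -expgS.
by rewrite -exponent_predK expg_exponent ?groupR.
Qed.

Lemma commgXXVn x y i j : x \in G -> y \in G ->
  [~ y ^+ j, x ^+ i] = [~ x, y] ^+ (k * (j * i)).
Proof. by move=> xG yG; rewrite commgXXn // (commgVn xG yG) -expgM. Qed.

(* [~ x, y] is x^-1 y^-1 x y, while wcomm follows the convention x y x^-1 y^-1;
   the two agree in class 2. *)
Lemma commg_wcommE x y : x \in G -> y \in G -> x * y * (x^-1 * y^-1) = [~ x, y].
Proof.
move=> xG yG; rewrite (commgC x y) -mulgA (center_mulC (commg_center xG yG)).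
  by rewrite !mulgA mulgK mulgV mul1g commgEl /conjg !mulgA.
by rewrite groupM ?groupV.
Qed.

Section Collected.

Variables (a b : gT).
Hypotheses (aG : a \in G) (bG : b \in G).

Local Notation c := [~ a, b].

Lemma commgX_center n : c ^+ n \in 'Z(G).
Proof. exact/groupX/commg_center. Qed.

Lemma collected0 : collected a b 0 0 0 = 1.
Proof. by rewrite /collected !expg0 !mulg1. Qed.

Lemma collected_mod i j l :
  collected a b (i %% e) (j %% e) (l %% e) = collected a b i j l.
Proof. by rewrite /collected !expg_mod ?expg_exponent ?groupR. Qed.

Lemma collected_mul i j l i' j' l' :
  collected a b i j l * collected a b i' j' l' =
  collected a b (i + i') (j + j') (l + l' + k * (j * i')).
Proof.
have swap_ba : b ^+ j * a ^+ i' = a ^+ i' * b ^+ j * c ^+ (k * (j * i')).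
  by rewrite commgC commgXXVn.
rewrite /collected -mulgA (center_mulC (commgX_center l)); last first.
  by rewrite !groupM ?groupX ?groupR.
rewrite !mulgA -[a ^+ i * _ * _]mulgA swap_ba !mulgA.
rewrite -[_ * c ^+ _ * b ^+ j']mulgA (center_mulC (commgX_center _)) ?groupX //.
by rewrite !expgD -!mulgA -!expgD addnC [l' + l]addnC addnA.
Qed.

Lemma collected_inv i j l :
  (collected a b i j l)^-1 = collected a b (k * i) (k * j) (k * (l + i * j)).
Proof.
apply/eqP; rewrite eq_invg_mul collected_mul -collected_mod exponent_predK.
have -> : (l + k * (l + i * j) + k * (j * (k * i)) = k.+1 * (l + k * (i * j)))%N.
  by nia.
by rewrite -!mulSn !modnMr collected0.
Qed.

End Collected.

Lemma weval_collected v : exists i j l,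
  forall a b, a \in G -> b \in G -> weval a b v = collected a b i j l.
Proof.
elim: v => [| | | u [i [j [l IHu]]] w [i' [j' [l' IHw]]] | u [i [j [l IHu]]]].
- by exists 1%N, 0%N, 0%N => a b aG bG; rewrite /collected expg1 !expg0 !mulg1.
- by exists 0%N, 1%N, 0%N => a b aG bG; rewrite /collected expg1 !expg0 mul1g mulg1.
- by exists 0%N, 0%N, 0%N => a b aG bG; rewrite collected0.
- exists (i + i')%N, (j + j')%N, (l + l' + k * (j * i'))%N => a b aG bG.
  by rewrite /= IHu // IHw // collected_mul.
- exists (k * i)%N, (k * j)%N, (k * (l + i * j))%N => a b aG bG.
  by rewrite /= IHu // collected_inv.
Qed.

Lemma collected_shearl a b h i j l : a \in G -> b \in G ->
  collected (a * b ^+ h) b i j l =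
  collected a b i (h * i + j) (k * (h * 'C(i, 2)) + l).
Proof.
move=> aG bG; have bhG : b ^+ h \in G by rewrite groupX.
rewrite /collected; have -> : [~ a * b ^+ h, b] = [~ a, b].
  rewrite commMgJ center_conj ?commg_center //.
  have /commgP/eqP -> : commute (b ^+ h) b by exact/commute_sym/commuteX.
  by rewrite mulg1.
rewrite (expMg_Rmul i (commute_commg bhG aG bhG) (commute_commg bhG aG aG)).
rewrite commXgn // (commgVn aG bG) -!expgM.
rewrite -[_ * _ * b ^+ j]mulgA (center_mulC (commgX_center _ _ _)) ?groupX //.
by rewrite !expgD !mulgA.
Qed.

Lemma collected_shearr a b h i j l : a \in G -> b \in G ->
  collected a (b * a ^+ h) i j l =
  collected a b (i + h * j) j (k * (j * (h * j)) + h * 'C(j, 2) + l).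
Proof.
move=> aG bG; have ahG : a ^+ h \in G by rewrite groupX.
rewrite /collected; have -> : [~ a, b * a ^+ h] = [~ a, b].
  by rewrite commgMJ commgXg mul1g center_conj ?commg_center.
rewrite (expMg_Rmul j (commute_commg ahG bG ahG) (commute_commg ahG bG bG)).
rewrite commXgn // -!expgM !mulgA -[a ^+ i * b ^+ j * _]mulgA [b ^+ j * _]commgC.
by rewrite commgXXVn // !expgD !mulgA.
Qed.

Definition collected_image i j l := [set collected a b i j l | a in G, b in G].

Lemma word_image_collected v : exists i j l, word_image G v = collected_image i j l.
Proof.
have [i [j [l evE]]] := weval_collected v.
by exists i, j, l; apply: eq_in_imset2.
Qed.

Lemma collected_image_congr_mod i j l i' j' l' :
  i = i' %[mod e] -> j = j' %[mod e] -> l = l' %[mod e] ->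
  collected_image i j l = collected_image i' j' l'.
Proof.
move=> Ei Ej El; apply: eq_in_imset2 => a b aG bG.
by rewrite -collected_mod // Ei Ej El collected_mod.
Qed.

Lemma collected_image_shearl h i j l :
  collected_image i (h * i + j) (k * (h * 'C(i, 2)) + l) = collected_image i j l.
Proof.
apply/setP => g; apply/imset2P/imset2P => -[a b aG bG ->].
  by exists (a * b ^+ h) b; rewrite ?collected_shearl // groupM ?groupX.
have abG : a * (b ^+ h)^-1 \in G by rewrite groupM ?groupV ?groupX.
by exists (a * (b ^+ h)^-1) b; rewrite // -collected_shearl ?mulgKV.
Qed.

Lemma collected_image_shearr h i j l :
  collected_image (i + h * j) j (k * (j * (h * j)) + h * 'C(j, 2) + l) =
  collected_image i j l.
Proof.
apply/setP => g; apply/imset2P/imset2P => -[a b aG bG ->].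
  by exists a (b * a ^+ h); rewrite ?collected_shearr // groupM ?groupX.
have baG : b * (a ^+ h)^-1 \in G by rewrite groupM ?groupV ?groupX.
by exists a (b * (a ^+ h)^-1); rewrite // -collected_shearr ?mulgKV.
Qed.

Lemma collected_image_subl i j l : (i <= j)%N ->
  exists l', collected_image i j l = collected_image i (j - i) l'.
Proof.
move=> le_ij; exists (k * (k * 'C(i, 2)) + l)%N.
rewrite -(collected_image_shearl k); apply: collected_image_congr_mod => //.
by rewrite exponent_predK -{1}(subnKC le_ij) addnA -mulSnr mulnC modnMDl.
Qed.

Lemma collected_image_subr i j l : (j <= i)%N ->
  exists l', collected_image i j l = collected_image (i - j) j l'.
Proof.
move=> le_ji; exists (k * (j * (k * j)) + k * 'C(j, 2) + l)%N.
rewrite -(collected_image_shearr k); apply: collected_image_congr_mod => //.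
by rewrite exponent_predK -{1}(subnKC le_ji) addnAC -mulSn mulnC modnMDl.
Qed.

Lemma collected_image_gcd i j l :
  exists l', collected_image i j l = collected_image (gcdn i j) 0 l'.
Proof.
have [n] := ubnP (i + j); elim: n => // n IHn in i j l *; rewrite ltnS => le_ij_n.
have [-> | j_gt0] := posnP j; first by exists l; rewrite gcdn0.
have [-> | i_gt0] := posnP i.
  rewrite gcd0n -(collected_image_shearr 1) add0n mul1n; set l1 := (_ + l)%N.
  have [l' ->] := collected_image_subl l1 (leqnn j).
  by exists l'; rewrite subnn.
have [le_ij | lt_ji] := leqP i j.
  have [l' ->] := collected_image_subl l le_ij.
  have [|l'' ->] := IHn i (j - i) l'; first lia.
  by exists l''; rewrite -gcdnDl subnKC.
have [l' ->] := collected_image_subr l (ltnW lt_ji).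
have [|l'' ->] := IHn (i - j) j l'; first lia.
by exists l''; rewrite gcdnC -gcdnDl subnKC 1?gcdnC // ltnW.
Qed.

Lemma collected_image_commg_gcd i l :
  collected_image i 0 l = collected_image i 0 (gcdn l (exponent [~: G, G])).
Proof.
set e' := exponent [~: G, G].
have [-> | l_gt0] := posnP l.
  apply: eq_in_imset2 => a b aG bG.
  by rewrite /collected gcd0n expg_exponent ?expg0 ?mem_commg.
set n := gcdn l e'; have [u v Bezout _] := egcdnP e' l_gt0.
apply/setP => g; apply/imset2P/imset2P => -[a b aG bG ->].
  exists a (b ^+ (l %/ n)); rewrite ?groupX // /collected !expg0 commgXn //.
  by rewrite -expgM divnK ?dvdn_gcdl.
exists a (b ^+ u); rewrite ?groupX // /collected !expg0 commgXn //.
rewrite -expgM Bezout expgD mulnC expgM.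
by rewrite expg_exponent ?expg1n ?mul1g ?mem_commg.
Qed.

Lemma exponent_derived_dvd : exponent [~: G, G] %| exponent (G / 'Z(G)).
Proof.
have abelian_comm : abelian (commg_set G G).
  exact: abelianS (subset_trans (subset_gen _) cGG) (center_abelian G).
rewrite /commutator abelian_exponent_gen //.
apply/exponentP => _ /imset2P[x y xG yG ->].
have yN : y \in 'N('Z(G)) by rewrite (subsetP (normal_norm (center_normal G))).
have yfZ : y ^+ exponent (G / 'Z(G)) \in 'Z(G).
  by apply: coset_idr; rewrite ?groupX // morphX ?expg_exponent ?mem_quotient.
by rewrite -commgXn //; apply/eqP/commgP/commute_sym/center_mulC.
Qed.

Lemma weval_wW a b m n : a \in G -> b \in G ->
  weval a b (wW m n) = collected a b m 0 n.
Proof.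
move=> aG bG; rewrite /= !weval_wpow commg_wcommE ?groupX // commgXn //.
by rewrite /collected expg0 mulg1.
Qed.

Lemma word_image_wW m n : word_image G (wW m n) = collected_image m 0 n.
Proof. by apply: eq_in_imset2 => a b aG bG; rewrite weval_wW. Qed.

End ClassTwo.

Theorem theorem3p7 (gT : finGroupType) (G : {group gT}) :
  ([~: G, G] \subset 'Z(G))%g ->
  forall v : word2,
    exists m n : nat,
      [/\ m %| exponent G, n %| exponent (G / 'Z(G))%g,
          n <= exponent [~: G, G]%g
        & word_image G v = word_image G (wW m n)].
Proof.
move=> cGG v.
have [i [j [l ->]]] := word_image_collected cGG v.
have [l1 ->] := collected_image_gcd cGG i j l.
have -> : collected_image G (gcdn i j) 0 l1 =
          collected_image G (gcdn i j) (exponent G) l1.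
  by apply: collected_image_congr_mod; rewrite ?modnn ?mod0n.
have [l2 ->] := collected_image_gcd cGG (gcdn i j) (exponent G) l1.
exists (gcdn (gcdn i j) (exponent G)), (gcdn l2 (exponent [~: G, G])); split.
- exact: dvdn_gcdr.
- exact: dvdn_trans (dvdn_gcdr _ _) (exponent_derived_dvd cGG).
- exact: dvdn_leq (exponent_gt0 _) (dvdn_gcdr _ _).
by rewrite (word_image_wW cGG) (collected_image_commg_gcd cGG).
Qed.
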